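(* Let $(R_1,+_1,\circ_1)$ and $(R_2,+_2,\circ_2)$ be commutative multiplicative hyperrings with nonzero identity. Let $\alpha_1$ be a good endomorphism of $R_1$ and $\alpha_2$ a good endomorphism of $R_2$, and let $\bar\alpha(r_1,r_2)=(\alpha_1(r_1),\alpha_2(r_2))$ on $R_1\times R_2$. Let $I_1$ be a hyperideal of $R_1$. Then $I_1$ is an $\alpha_1$-prime hyperideal of $R_1$ if and only if $I_1\times R_2$ is an $\bar\alpha$-prime hyperideal of $R_1\times R_2$.
   Context: A multiplicative hyperring is an abelian group $(R,+)$ with a hyperoperation $\circ:R\times R\to \mathcal P^*(R)$ (nonempty subsets) such that $a\circ(b\circ c)=(a\circ b)\circ c$, $a\circ(b+c)\subseteq a\circ b+a\circ c$, $(b+c)\circ a\subseteq b\circ a+c\circ a$, and $a\circ(-b)=(-a)\circ b=-(a\circ b)$. Products of subsets are unions of elementwise products. Commutative means $a\circ b=b\circ a$. An identity $1$ satisfies $a\in1\circ a$ for all $a$. A hyperideal is a nonempty $I$ closed under subtraction with $r\circ x\subseteq I$ for $r\in R$, $x\in I$. Standing assumption: all hyperideals are $\mathbf C$-hyperideals, i.e. for every finite product $A=r_1\circ\cdots\circ r_n$, $A\cap I\neq\emptyset$ implies $A\subseteq I$. A good endomorphism $\alpha$ satisfies $\alpha(x+y)=\alpha(x)+\alpha(y)$ and $\alpha(x\circ y)=\alpha(x)\circ\alpha(y)$. A hyperideal $I$ is $\alpha$-prime if for all $x,y$, $x\circ y\subseteq I$ implies $x\in I$ or $\alpha(y)\in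 I$. $R_1\times R_2$ is the multiplicative hyperring with componentwise addition and $(x_1,x_2)\circ(y_1,y_2)=\{(x,y): x\in x_1\circ_1 y_1,\ y\in x_2\circ_2 y_2\}$. The map $\bar\alpha$ is a good endomorphism of it. *)

(* the additive group is a zmodType; subsets are predicates. *)
From mathcomp Require Import all_boot all_algebra.
Set Implicit Arguments. Unset Strict Implicit. Unset Printing Implicit Defensive.
Import GRing.Theory.
Local Open Scope ring_scope.

Definition hset (T : Type) := T -> Prop.
Definition hsubset T (A B : hset T) := forall x, A x -> B x.
Definition hseteq T (A B : hset T) := forall x, A x <-> B x.

Definition hyperop (R : Type) := R -> R -> hset R.

Section Ops.
Variables (R : zmodType) (hop : hyperop R).

Definition setop_l (A : hset R) (b : R) : hset R :=
  fun z => exists2 x, A x & hop x b z.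
Definition setop_r (a : R) (B : hset R) : hset R :=
  fun z => exists2 y, B y & hop a y z.
Definition setadd (A B : hset R) : hset R :=
  fun z => exists x y, [/\ A x, B y & z = x + y].
Definition setopp (A : hset R) : hset R := fun z => A (- z).

(* finite product r1 o r2 o ... o rn (left-bracketed; brackets irrelevant by
   associativity), given r1 and the list [r2; ...; rn] *)
Definition hprod (r1 : R) (l : seq R) : hset R :=
  foldl setop_l (fun z => z = r1) l.

Definition is_mult_hyperring : Prop :=
  [/\ (forall a b, exists z, hop a b z),
      (forall a b c, hseteq (setop_r a (hop b c)) (setop_l (hop a b) c)),
      (forall a b c, hsubset (hop a (b + c)) (setadd (hop a b) (hop a c))),
      (forall a b c, hsubset (hop (b + c) a) (setadd (hop b a) (hop c a))) &
      (forall a b, hseteq (hop a (- b)) (hop (- a) b) /\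
                   hseteq (hop (- a) b) (setopp (hop a b)))].

Definition hcommutative : Prop := forall a b, hseteq (hop a b) (hop b a).

Definition is_identity (one : R) : Prop := forall a, hop one a a.

(* hyperideal; by the standing assumption every hyperideal is a C-hyperideal *)
Definition is_hyperideal (I : hset R) : Prop :=
  [/\ exists x, I x,
      (forall x y, I x -> I y -> I (x - y)),
      (forall r x, I x -> hsubset (hop r x) I) &
      (forall r1 l, (exists z, hprod r1 l z /\ I z) -> hsubset (hprod r1 l) I)].

Definition good_endo (alpha : R -> R) : Prop :=
  (forall x y, alpha (x + y) = alpha x + alpha y) /\
  (forall x y, hseteq (fun z => exists2 w, hop x y w & z = alpha w)
                      (hop (alpha x) (alpha y))).

Definition alpha_prime (alpha : R -> R) (I : hset R) : Prop :=
  is_hyperideal I /\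
  forall x y, hsubset (hop x y) I -> I x \/ I (alpha y).
End Ops.

Definition prod_hop (R1 R2 : zmodType) (h1 : hyperop R1) (h2 : hyperop R2)
  : hyperop (R1 * R2)%type :=
  fun x y z => h1 x.1 y.1 z.1 /\ h2 x.2 y.2 z.2.

Definition prod_map (R1 R2 : Type) (a1 : R1 -> R1) (a2 : R2 -> R2)
  : (R1 * R2)%type -> (R1 * R2)%type := fun x => (a1 x.1, a2 x.2).

Definition prod_set (R1 R2 : Type) (A : hset R1) (B : hset R2)
  : hset (R1 * R2)%type := fun x => A x.1 /\ B x.2.

From mathcomp Require Import all_boot all_algebra.
Set Implicit Arguments. Unset Strict Implicit. Unset Printing Implicit Defensive.
Local Open Scope ring_scope.

(* Products in R1 x R2 are computed coordinatewise, so a finite product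
   projects onto the corresponding finite products in R1 and R2; hence the
   product of two hyperideals is again a (C-)hyperideal, and I1 x R2 is one.
   A product x o y lies in I1 x R2 exactly when x1 o y1 lies in I1, provided
   the products in R2 are nonempty; this transfers alpha-primality both ways.
   No other hypothesis on R1, R2 or the endomorphisms is needed. *)

Section ProductHyperring.

Variables (R1 R2 : zmodType) (h1 : hyperop R1) (h2 : hyperop R2).

Local Notation hop := (prod_hop h1 h2).

Lemma foldl_setop_l_fst (l : seq (R1 * R2)) (A : hset (R1 * R2)) (A1 : hset R1) :
  (forall z, A z -> A1 z.1) ->
  forall z, foldl (setop_l hop) A l z -> foldl (setop_l h1) A1 (map fst l) z.1.
Proof.
elim: l A A1 => [|x l IHl] A A1 sAA1 z /=; first exact: sAA1.
by apply: IHl => w [u Au [hu1 _]]; exists u.1; first exact: sAA1.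
Qed.

Lemma foldl_setop_l_snd (l : seq (R1 * R2)) (A : hset (R1 * R2)) (A2 : hset R2) :
  (forall z, A z -> A2 z.2) ->
  forall z, foldl (setop_l hop) A l z -> foldl (setop_l h2) A2 (map snd l) z.2.
Proof.
elim: l A A2 => [|x l IHl] A A2 sAA2 z /=; first exact: sAA2.
by apply: IHl => w [u Au [_ hu2]]; exists u.2; first exact: sAA2.
Qed.

Lemma hprod_fst (r : R1 * R2) (l : seq (R1 * R2)) (z : R1 * R2) :
  hprod hop r l z -> hprod h1 r.1 (map fst l) z.1.
Proof. by apply: foldl_setop_l_fst => _ ->. Qed.

Lemma hprod_snd (r : R1 * R2) (l : seq (R1 * R2)) (z : R1 * R2) :
  hprod hop r l z -> hprod h2 r.2 (map snd l) z.2.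
Proof. by apply: foldl_setop_l_snd => _ ->. Qed.

Lemma prod_hyperideal (I1 : hset R1) (I2 : hset R2) :
  is_hyperideal h1 I1 -> is_hyperideal h2 I2 -> is_hyperideal hop (prod_set I1 I2).
Proof.
move=> [[x1 Ix1] subI1 mulI1 CI1] [[x2 Ix2] subI2 mulI2 CI2]; split.
- by exists (x1, x2).
- by move=> a b [Ia1 Ia2] [Ib1 Ib2]; split; [exact: subI1 | exact: subI2].
- move=> r a [Ia1 Ia2] z [hz1 hz2].
  by split; [exact: mulI1 hz1 | exact: mulI2 hz2].
- move=> r l [z [hz [Iz1 Iz2]]] w hw; split.
  + apply: (CI1 r.1 (map fst l)); last exact: hprod_fst.
    by exists z.1; split; first exact: hprod_fst.
  + apply: (CI2 r.2 (map snd l)); last exact: hprod_snd.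
    by exists z.2; split; first exact: hprod_snd.
Qed.

Lemma hyperideal_full (R : zmodType) (h : hyperop R) :
  is_hyperideal h (fun _ : R => True).
Proof. by split=> //; exists 0. Qed.

Hypothesis h2_nonempty : forall a b : R2, exists z, h2 a b z.

Lemma prod_hop_sub_prod_full (I1 : hset R1) (x y : R1 * R2) :
  hsubset (hop x y) (prod_set I1 (fun _ : R2 => True)) <-> hsubset (h1 x.1 y.1) I1.
Proof.
split=> [sxyI z1 hz1 | sxyI z [hz1 _]]; last by split=> //; exact: sxyI.
have [z2 hz2] := h2_nonempty x.2 y.2.
by have [] := sxyI (z1, z2) (conj hz1 hz2).
Qed.

Lemma alpha_prime_prod_full (alpha1 : R1 -> R1) (alpha2 : R2 -> R2) (I1 : hset R1) :
  is_hyperideal h1 I1 ->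
  (alpha_prime h1 alpha1 I1 <->
   alpha_prime hop (prod_map alpha1 alpha2) (prod_set I1 (fun _ : R2 => True))).
Proof.
move=> idealI1; split=> [[_ primeI1] | [_ primeI]].
- split; first exact: prod_hyperideal (hyperideal_full h2).
  by move=> x y /prod_hop_sub_prod_full/primeI1 [Ix | Iy]; [left | right].
- split=> // a b sabI.
  have sab0I : hsubset (hop (a, 0) (b, 0)) (prod_set I1 (fun _ => True)).
    exact/prod_hop_sub_prod_full.
  by case/primeI: sab0I => [[Ia _] | [Ib _]]; [left | right].
Qed.

End ProductHyperring.

Theorem mainTheorem18 (R1 R2 : zmodType) (h1 : hyperop R1) (h2 : hyperop R2)
  (one1 : R1) (one2 : R2) (alpha1 : R1 -> R1) (alpha2 : R2 -> R2)
  (I1 : hset R1) :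
  is_mult_hyperring h1 -> hcommutative h1 -> is_identity h1 one1 -> one1 != 0 ->
  is_mult_hyperring h2 -> hcommutative h2 -> is_identity h2 one2 -> one2 != 0 ->
  good_endo h1 alpha1 -> good_endo h2 alpha2 ->
  is_hyperideal h1 I1 ->
  (alpha_prime h1 alpha1 I1 <->
   alpha_prime (prod_hop h1 h2) (prod_map alpha1 alpha2)
               (prod_set I1 (fun _ : R2 => True))).
Proof.
move=> _ _ _ _ [h2_nonempty _ _ _ _] _ _ _ _ _ idealI1.
exact: alpha_prime_prod_full.
Qed.
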